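(* Let $x,y\in\mathbb{Z}_3$ be $3$-adic integers and let $v=(v_1,v_2,\dots)$ be a sequence in $\{0,1\}$ containing infinitely many $1$'s. If $v$ is a back tracing parity vector for both $x$ and $y$, then $x=y$. (In particular, this holds for positive integers $x,y$.)
   Context: On $\mathbb{Z}_3$ let $T_0^{-1}(z)=2z$, and for $z\equiv 2\pmod 3$ let $T_1^{-1}(z)=(2z-1)/3\in\mathbb{Z}_3$. A sequence $(v_1,v_2,\dots)\in\{0,1\}^{\mathbb{N}}$ is a back tracing parity vector for $x\in\mathbb{Z}_3$ if the sequence $x_0=x$, $x_i=T_{v_i}^{-1}(x_{i-1})$ ($i\ge 1$) is everywhere defined, i.e. $x_{i-1}\equiv 2\pmod 3$ whenever $v_i=1$. For a positive integer $x$ this agrees with: there are positive integers $x_0=x,x_1,x_2,\dots$ with $T(x_i)=x_{i-1}$ and $x_i\equiv v_i\pmod 2$, where $T(z)=z/2$ for $z$ even and $T(z)=(3z+1)/2$ for $z$ odd. *)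

From HB Require Import structures.
From mathcomp Require Import all_boot all_order all_algebra.
Set Implicit Arguments. Unset Strict Implicit. Unset Printing Implicit Defensive.
Import Order.TTheory GRing.Theory Num.Theory.
Local Open Scope ring_scope.

(* An element of Z_3: a sequence (a_n) of integers with a_{n+1} = a_n mod 3^n;
   a_n represents the residue of the 3-adic integer modulo 3^n. *)
Record Z3 := MkZ3 {
  z3seq :> nat -> int;
  z3coh : forall n : nat, (z3seq n.+1 = z3seq n %[mod (3 ^ n)%N])%Z
}.

Definition eqZ3 (x y : Z3) : Prop :=
  forall n : nat, (x n = y n %[mod (3 ^ n)%N])%Z.

Definition cong2mod3 (z : Z3) : Prop := (z 1%N = 2 %[mod 3%N])%Z.

(* w = T_b^{-1}(z), as a relation (T_1^{-1} is partial):
   b = false : w = 2 z;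
   b = true  : z = 2 (mod 3) and w = (2z - 1)/3, i.e. 3 w = 2 z - 1 in Z_3
               (3 is not a zero divisor in Z_3, so w is uniquely determined). *)
Definition TinvRel (b : bool) (z w : Z3) : Prop :=
  if b then cong2mod3 z /\
            (forall n : nat, (3 * w n = 2 * z n - 1 %[mod (3 ^ n)%N])%Z)
  else forall n : nat, (w n = 2 * z n %[mod (3 ^ n)%N])%Z.

(* v : nat -> bool, with v i standing for v_{i+1} of the paper.
   v is a back tracing parity vector for x: there are x_0 = x, x_1, ... in Z_3
   with x_{i+1} = T_{v_{i+1}}^{-1}(x_i), everywhere defined. *)
Definition back_tracing_pv (v : nat -> bool) (x : Z3) : Prop :=
  exists xs : nat -> Z3, xs 0%N = x /\
    forall i : nat, TinvRel (v i) (xs i) (xs i.+1).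

Definition infinitely_many_ones (v : nat -> bool) : Prop :=
  forall N : nat, exists i : nat, (N <= i)%N /\ v i = true.

From mathcomp Require Import all_boot all_order all_algebra.
From mathcomp Require Import ring.
Import GRing.Theory.
Set Implicit Arguments. Unset Strict Implicit.
Local Open Scope ring_scope.

(* Say that two 3-adic integers agree to level k when their residues modulo
   3^k coincide.  Walking one step backwards along the parity vector never
   loses agreement: if T_0^{-1} z = 2z and T_0^{-1} z' = 2z' agree to level k,
   so do z and z' because 2 is invertible modulo 3^k; and a step by T_1^{-1}
   even gains one level, since 3 T_1^{-1} z = 2z - 1 turns agreement of
   T_1^{-1} z, T_1^{-1} z' to level k into agreement of z, z' to level k+1.
   Hence, by induction on k, the two back traces of x and y agree to level k
   at every position i: to reach level k+1 at position i, pick a later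
   position j >= i with v_j = 1, gain a level there from the induction
   hypothesis at j+1, and carry it back to position i.  At position 0 this is
   x = y modulo every 3^k. *)

Definition agree (k : nat) (a b : Z3) : Prop :=
  (((3 ^ k)%N : int) %| (a k - b k))%Z.

Lemma dvdz_of_eqmod (d m n : int) : (m = n %[mod d])%Z -> (d %| (m - n))%Z.
Proof. by move=> h; rewrite -eqz_mod_dvd h. Qed.

Lemma z3coh_dvd (a : Z3) (k : nat) :
  (((3 ^ k)%N : int) %| (a k.+1 - a k))%Z.
Proof. exact/dvdz_of_eqmod/z3coh. Qed.

(* 2 is a unit modulo 3^k, which lets us cancel the factor 2 of T_0. *)
Lemma coprime_pow3_2 (k : nat) : coprimez ((3 ^ k)%N : int) 2.
Proof. by rewrite coprimezE /= coprimeXl. Qed.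

Lemma agree0 (a b : Z3) : agree 0 a b.
Proof. by rewrite /agree expn0 dvd1z. Qed.

Lemma agree_weaken (k : nat) (a b : Z3) : agree k.+1 a b -> agree k a b.
Proof.
move=> h; rewrite /agree.
have -> : a k - b k = - (a k.+1 - a k) + (a k.+1 - b k.+1) + (b k.+1 - b k)
  by ring.
rewrite rpredD ?z3coh_dvd // rpredD ?rpredN ?z3coh_dvd //.
by apply: dvdz_trans h; rewrite expnS PoszM dvdz_mull.
Qed.

Lemma agree_succ_residue (k : nat) (a b : Z3) :
  agree k a b -> (((3 ^ k)%N : int) %| (a k.+1 - b k.+1))%Z.
Proof.
move=> h.
have -> : a k.+1 - b k.+1 = (a k.+1 - a k) + (a k - b k) - (b k.+1 - b k)
  by ring.
by rewrite rpredB ?z3coh_dvd // rpredD ?z3coh_dvd.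
Qed.

(* A T_0^{-1} step backwards keeps the level of agreement (2 is a unit). *)
Lemma agree_back_T0 (k : nat) (z z' w w' : Z3) :
  TinvRel false z w -> TinvRel false z' w' -> agree k w w' -> agree k z z'.
Proof.
move=> /= hw hw' h; rewrite /agree -(Gauss_dvdzr _ (coprime_pow3_2 k)).
have -> : 2 * (z k - z' k) = (w k - w' k) - (w k - 2 * z k) + (w' k - 2 * z' k)
  by ring.
by apply: rpredD; first apply: rpredB => //; apply: dvdz_of_eqmod.
Qed.

(* A T_1^{-1} step backwards gains one level of agreement (3 w = 2 z - 1). *)
Lemma agree_back_T1 (k : nat) (z z' w w' : Z3) :
  TinvRel true z w -> TinvRel true z' w' -> agree k w w' -> agree k.+1 z z'.
Proof.
move=> /= [_ hw] [_ hw'] h; rewrite /agree -(Gauss_dvdzr _ (coprime_pow3_2 k.+1)).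
have h3 : (((3 ^ k.+1)%N : int) %| 3 * (w k.+1 - w' k.+1))%Z.
  by rewrite expnS PoszM dvdz_mul ?agree_succ_residue.
have -> : 2 * (z k.+1 - z' k.+1) = 3 * (w k.+1 - w' k.+1)
    - (3 * w k.+1 - (2 * z k.+1 - 1)) + (3 * w' k.+1 - (2 * z' k.+1 - 1))
  by ring.
by apply: rpredD; first apply: rpredB => //; apply: dvdz_of_eqmod.
Qed.

Lemma agree_back (k : nat) (b : bool) (z z' w w' : Z3) :
  TinvRel b z w -> TinvRel b z' w' -> agree k w w' -> agree k z z'.
Proof.
case: b => hw hw' h; last exact: agree_back_T0 hw hw' h.
exact: agree_weaken (agree_back_T1 hw hw' h).
Qed.

Section BackTraces.

Variables (v : nat -> bool) (xs ys : nat -> Z3).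
Hypothesis xs_trace : forall i : nat, TinvRel (v i) (xs i) (xs i.+1).
Hypothesis ys_trace : forall i : nat, TinvRel (v i) (ys i) (ys i.+1).

Lemma traces_agree_back (k i j : nat) :
  (i <= j)%N -> agree k (xs j) (ys j) -> agree k (xs i) (ys i).
Proof.
move=> /subnKC <-; elim: (j - i)%N => [|d IHd]; first by rewrite addn0.
by rewrite addnS => h; apply/IHd/(agree_back (xs_trace _) (ys_trace _)).
Qed.

Lemma traces_agree (k : nat) :
  infinitely_many_ones v -> forall i : nat, agree k (xs i) (ys i).
Proof.
move=> hinf; elim: k => [|k IH] i; first exact: agree0.
have [j [le_ij vj]] := hinf i; apply: (traces_agree_back le_ij).
move: (xs_trace j) (ys_trace j); rewrite vj => hx hy.
exact: agree_back_T1 hx hy (IH j.+1).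
Qed.

End BackTraces.

Theorem mainTheorem7 (x y : Z3) (v : nat -> bool) :
  infinitely_many_ones v ->
  back_tracing_pv v x -> back_tracing_pv v y ->
  eqZ3 x y.
Proof.
move=> hinf [xs [<- xs_trace]] [ys [<- ys_trace]] k.
by apply/eqP; rewrite eqz_mod_dvd; exact: traces_agree xs_trace ys_trace k hinf 0%N.
Qed.
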